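(* Let $B>0$, $C>0$ and $\gamma\in[0,1]$ be fixed. For $\alpha\in[0,1/2]$ define $$b_{a}(\alpha)=\frac{\left(-2\alpha^4+5\alpha^3-4\alpha^2+\alpha\right)\gamma+4\alpha^4-9\alpha^3+4\alpha^2}{2\alpha^3-4\alpha^2+1},$$ $$b_{h}(\alpha)=\frac{\left(2\alpha^4-5\alpha^3+4\alpha^2-\alpha\right)\gamma-4\alpha^4+10\alpha^3-6\alpha^2-\alpha+1}{2\alpha^3-4\alpha^2+1},$$ and set $B_{\mathrm{attacker}}(\alpha)=B\,b_a(\alpha)$, $B_{\mathrm{honest}}(\alpha)=B\,b_h(\alpha)$. For $M>0$ and $H>0$ let $\alpha=\frac{M}{H+M}$ and define $$\mathcal{U}^S(H)=B\,\frac{B_{\mathrm{honest}}(\alpha)}{(1-\alpha)B}\cdot\frac{B}{\left(B_{\mathrm{attacker}}(\alpha)+B_{\mathrm{honest}}(\alpha)\right)(H+M)}-C.$$ Then there exists $M_{\max}$ (depending on $\gamma$, $B$, $C$) such that, for $M>0$, there exists $H^*$ with $H^*>M$ and $\mathcal{U}^S(H^* )=0$ if and only if $M\le M_{\max}$.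
   Context: Model of selfish mining (in the sense of Eyal and Sirer) with elastic hash supply. $B$ is the expected reward per block, $C$ the expected cost of mining per unit of hash rate until some miner finds a block, $H$ the total hash rate of honest miners, $M$ the hash rate of the selfish-mining attacking pool, $\gamma$ the fraction of honest miners that mine on the attacking pool's block during a tie. $\alpha=M/(H+M)$ is the attacker's share of total hash rate. $B_{\mathrm{attacker}}$ and $B_{\mathrm{honest}}$ are the expected rewards of the attacker and honest miners per block discovery (including hidden ones), and $\mathcal{U}^S(H)$ is the honest miners' profit per unit hash rate under the selfish mining attack after difficulty adjustment. An equilibrium honest hash supply is a value $H^*$ with $\mathcal{U}^S(H^* )=0$. *)

From Stdlib Require Import Reals.
Open Scope R_scope.

Definition b_a (gamma alpha : R) : R :=
  ((-2*alpha^4 + 5*alpha^3 - 4*alpha^2 + alpha) * gamma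
     + 4*alpha^4 - 9*alpha^3 + 4*alpha^2)
  / (2*alpha^3 - 4*alpha^2 + 1).

Definition b_h (gamma alpha : R) : R :=
  ((2*alpha^4 - 5*alpha^3 + 4*alpha^2 - alpha) * gamma
     - 4*alpha^4 + 10*alpha^3 - 6*alpha^2 - alpha + 1)
  / (2*alpha^3 - 4*alpha^2 + 1).

Definition B_attacker (B gamma alpha : R) : R := B * b_a gamma alpha.
Definition B_honest (B gamma alpha : R) : R := B * b_h gamma alpha.

Definition alpha_of (M H : R) : R := M / (H + M).

Definition U_S (B C gamma M H : R) : R :=
  let alpha := alpha_of M H in
  B * (B_honest B gamma alpha / ((1 - alpha) * B))
    * (B / ((B_attacker B gamma alpha + B_honest B gamma alpha) * (H + M)))
  - C.

From Stdlib Require Import Reals Lra Psatz Ranalysis5.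
Open Scope R_scope.

(* Writing a = M/(H+M), the constraint H > M says exactly that a lies in
   (0, 1/2), and then H = M/a - M.  Substituting, U^S(H) = C (g(a) - M) / M
   with g = [equilibrium_rate B C gamma], which is continuous on [0, 1/2] and
   vanishes at both endpoints.  Hence M > 0 admits an equilibrium iff M is a
   value of g on (0, 1/2), and by the intermediate value theorem these values
   are exactly (0, max g]: take M_max = max g.  Nothing here uses the bounds
   on gamma. *)

Lemma IVT_between_zeros (f : R -> R) (a b x y : R) :
  (forall c, a <= c <= b -> continuity_pt f c) ->
  f a = 0 -> f b = 0 -> a <= x <= b -> 0 < y <= f x ->
  exists z, a < z < b /\ f z = y.
Proof.
  intros Hcont Ha Hb Hx [Hy Hyx].
  assert (Hax : a < x) by (destruct (Req_dec a x); subst; lra).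
  assert (Hxb : x < b) by (destruct (Req_dec x b); subst; lra).
  destruct Hyx as [Hlt | Heq]; [| exists x; split; [lra | auto]].
  destruct (IVT_interv (fun t => f t - y) a x) as [z [Hz Hfz]]; try lra.
  - intros c Hc. apply continuity_pt_minus; [apply Hcont; lra |].
    apply continuity_pt_const. now intros u v.
  - exists z. assert (z <> a) by (intros ->; lra). lra.
Qed.

Definition honest_num (gamma a : R) : R :=
  (2*a^4 - 5*a^3 + 4*a^2 - a) * gamma - 4*a^4 + 10*a^3 - 6*a^2 - a + 1.

Definition reward_sum_num (a : R) : R := a^3 - 2*a^2 - a + 1.

(* The attacker hash rate M for which a is the equilibrium share M/(H+M). *)
Definition equilibrium_rate (B C gamma a : R) : R :=
  B * a * honest_num gamma a / (C * ((1 - a) * reward_sum_num a)).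

Lemma reward_den_pos (a : R) : 0 <= a <= 1/2 -> 0 < 2*a^3 - 4*a^2 + 1.
Proof. intros. nra. Qed.

Lemma reward_sum_num_pos (a : R) : 0 <= a <= 1/2 -> 0 < reward_sum_num a.
Proof. intros. unfold reward_sum_num. nra. Qed.

Lemma honest_num_half (gamma : R) : honest_num gamma (1/2) = 0.
Proof. unfold honest_num. field. Qed.

Lemma b_a_add_b_h (gamma a : R) : 0 <= a <= 1/2 ->
  b_a gamma a + b_h gamma a = reward_sum_num a / (2*a^3 - 4*a^2 + 1).
Proof.
  intros Ha. pose proof (reward_den_pos a Ha).
  unfold b_a, b_h, reward_sum_num. field. lra.
Qed.

Lemma equilibrium_rate_continuous (B C gamma a : R) :
  0 < C -> 0 <= a <= 1/2 -> continuity_pt (equilibrium_rate B C gamma) a.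
Proof.
  intros HC Ha. pose proof (reward_sum_num_pos a Ha).
  unfold equilibrium_rate, honest_num, reward_sum_num in *. reg.
  apply Rmult_integral_contrapositive; split; [lra |].
  apply Rmult_integral_contrapositive; split; lra.
Qed.

Lemma equilibrium_rate_0 (B C gamma : R) : equilibrium_rate B C gamma 0 = 0.
Proof. unfold equilibrium_rate. rewrite Rmult_0_r, !Rmult_0_l. apply Rdiv_0_l. Qed.

Lemma equilibrium_rate_half (B C gamma : R) :
  equilibrium_rate B C gamma (1/2) = 0.
Proof.
  unfold equilibrium_rate. rewrite honest_num_half, Rmult_0_r. apply Rdiv_0_l.
Qed.

Lemma alpha_of_bounds (M H : R) : 0 < M < H -> 0 < alpha_of M H < 1/2.
Proof.
  intros HMH. unfold alpha_of.
  split; [apply Rdiv_lt_0_compat; lra |].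
  apply Rmult_lt_reg_r with (H + M); [lra |].
  unfold Rdiv. rewrite Rmult_assoc, Rinv_l; lra.
Qed.

Lemma alpha_of_share (M a : R) : 0 < M -> 0 < a -> alpha_of M (M / a - M) = a.
Proof. intros. unfold alpha_of. field. lra. Qed.

Lemma share_honest_gt (M a : R) : 0 < M -> 0 < a < 1/2 -> M < M / a - M.
Proof.
  intros HM Ha.
  assert (2 * M < M / a); [| lra].
  apply Rmult_lt_reg_r with a; [lra |].
  replace (M / a * a) with M by (field; lra). nra.
Qed.

Lemma U_S_alpha (B C gamma M H : R) : 0 < B -> 0 < C -> 0 < M < H ->
  U_S B C gamma M H = C * (equilibrium_rate B C gamma (alpha_of M H) - M) / M.
Proof.
  intros HB HC HMH. pose proof (alpha_of_bounds M H HMH) as Ha.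
  unfold U_S; cbv zeta. set (a := alpha_of M H) in *.
  assert (HHM : H + M = M / a) by (unfold a, alpha_of; field; lra).
  pose proof (reward_den_pos a ltac:(lra)).
  pose proof (reward_sum_num_pos a ltac:(lra)).
  rewrite HHM. unfold B_attacker, B_honest.
  rewrite <- Rmult_plus_distr_l, b_a_add_b_h by lra.
  unfold b_h, equilibrium_rate, honest_num. field. repeat split; lra.
Qed.

Lemma U_S_eq0 (B C gamma M H : R) : 0 < B -> 0 < C -> 0 < M < H ->
  U_S B C gamma M H = 0 <-> equilibrium_rate B C gamma (alpha_of M H) = M.
Proof.
  intros HB HC HMH. rewrite U_S_alpha by assumption. split.
  - intros HU. unfold Rdiv in HU.
    apply Rmult_integral in HU as [HU | HU].
    + apply Rmult_integral in HU as [HU | HU]; lra.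
    + exfalso. exact (Rinv_neq_0_compat M ltac:(lra) HU).
  - intros ->. rewrite Rminus_diag, Rmult_0_r. apply Rdiv_0_l.
Qed.

Theorem theorem1 (B C gamma : R) (hB : 0 < B) (hC : 0 < C)
  (hg0 : 0 <= gamma) (hg1 : gamma <= 1) :
  exists Mmax : R, forall M : R, 0 < M ->
    ((exists Hs : R, Hs > M /\ U_S B C gamma M Hs = 0) <-> M <= Mmax).
Proof.
  pose proof (equilibrium_rate_continuous B C gamma) as Hcont.
  destruct (continuity_ab_maj (equilibrium_rate B C gamma) 0 (1/2) ltac:(lra)
              (fun a Ha => Hcont a hC Ha)) as [amax [Hmax Hamax]].
  exists (equilibrium_rate B C gamma amax). intros M HM. split.
  - intros [Hs [HHs HU]].
    apply U_S_eq0 in HU; [| lra ..]. rewrite <- HU.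
    pose proof (alpha_of_bounds M Hs ltac:(lra)). apply Hmax. lra.
  - intros HMmax.
    destruct (IVT_between_zeros (equilibrium_rate B C gamma) 0 (1/2) amax M
                (fun a Ha => Hcont a hC Ha) (equilibrium_rate_0 B C gamma)
                (equilibrium_rate_half B C gamma) Hamax (conj HM HMmax))
      as [a [Ha Hrate]].
    pose proof (share_honest_gt M a HM Ha).
    exists (M / a - M). split; [lra |].
    apply U_S_eq0; [lra .. |].
    rewrite alpha_of_share by lra. exact Hrate.
Qed.
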